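(* For every prime power $q$, there are no cutting $[7,4]_{q^3/q}$ systems.
   Context: An $[n,k]_{q^m/q}$ system is an $\mathbb F_q$-subspace $U$ of $\mathbb F_{q^m}^k$ with $\dim_{\mathbb F_q}(U)=n$ and $\langle U\rangle_{\mathbb F_{q^m}}=\mathbb F_{q^m}^k$. It is cutting if for every $\mathbb F_{q^m}$-hyperplane $H$ of $\mathbb F_{q^m}^k$ one has $\langle H\cap U\rangle_{\mathbb F_{q^m}}=H$. *)

From HB Require Import structures.
From mathcomp Require Import all_boot all_order all_algebra all_field.
Set Implicit Arguments. Unset Strict Implicit. Unset Printing Implicit Defensive.
Import GRing.Theory.
Local Open Scope ring_scope.

(* Vectors of L^k are modelled as finite functions 'I_k -> L; this type is
   canonically a vectType over F (the base field of L), so F-subspaces are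
   {vspace {ffun 'I_k -> L}} and \dim is the F-dimension. *)

Definition Lspan (F : fieldType) (L : fieldExtType F) (k : nat)
    (P : pred {ffun 'I_k -> L}) (v : {ffun 'I_k -> L}) : Prop :=
  exists (s : seq {ffun 'I_k -> L}) (c : seq L),
    all P s /\ size c = size s /\
    v = [ffun i => \sum_(j < size s) c`_j * (s`_j) i].

Definition Lhyperplane (F : fieldType) (L : fieldExtType F) (k : nat)
    (a : {ffun 'I_k -> L}) : pred {ffun 'I_k -> L} :=
  [pred v : {ffun 'I_k -> L} | \sum_(i < k) a i * v i == 0].

Definition is_system (F : fieldType) (L : fieldExtType F) (n k : nat)
    (U : {vspace {ffun 'I_k -> L}}) : Prop :=
  \dim U = n /\ forall v : {ffun 'I_k -> L}, Lspan (mem U) v.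

(* cutting: every L-hyperplane H satisfies <H cap U>_L = H
   (the inclusion <H cap U>_L <= H is automatic). *)
Definition is_cutting (F : fieldType) (L : fieldExtType F) (k : nat)
    (U : {vspace {ffun 'I_k -> L}}) : Prop :=
  forall a : {ffun 'I_k -> L}, a != 0 ->
    forall v, v \in Lhyperplane a ->
      Lspan (predI (Lhyperplane a) (mem U)) v.

From HB Require Import structures.
From mathcomp Require Import all_boot all_order all_algebra all_field.
From mathcomp Require Import ring zify.
Set Implicit Arguments. Unset Strict Implicit. Unset Printing Implicit Defensive.
Import GRing.Theory.
Local Open Scope ring_scope.

(* Fix lam in L \ F.  As 7 + 7 > 12 = dim_F L^4, U meets lam U, giving u <> 0
   with u, lam u in U; so U meets the L-line P = L u in dimension >= 2.  Pick
   x in U \ P with P <= U or lam x in U + P, and L-linear forms f, g vanishing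
   on u and x.  Then the part K of U killed by f and g has dimension >= 4,
   so U = K + C with dim C <= 3.  The q^3 - 1 nonzero vectors of C give
   fewer than q^3 ratios -g(c)/f(c); an al in L avoiding all of them makes the
   hyperplane al f + g = 0 meet U inside ker f, so that intersection cannot
   span it. *)

Section CoordinateSpace.
Variables (F : fieldType) (L : fieldExtType F) (k : nat).
Local Notation V := {ffun 'I_k -> L}.

Definition lscale (c : L) (v : V) : V := [ffun i => c * v i].
Definition lline (v : V) (c : L) : V := lscale c v.
Definition dot (a v : V) : L := \sum_i a i * v i.

Definition biorthogonal (f g e e' : V) :=
  [/\ dot f e = 1, dot f e' = 0, dot g e = 0 & dot g e' = 1].

Fact lscale_is_linear c : linear (lscale c).
Proof. by move=> a u v; apply/ffunP=> i; rewrite !ffunE mulrDr scalerAr. Qed.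
HB.instance Definition _ c :=
  GRing.isLinear.Build F V V _ (lscale c) (lscale_is_linear c).

Fact lline_is_linear v : linear (lline v).
Proof. by move=> a c d; apply/ffunP=> i; rewrite !ffunE mulrDl scalerAl. Qed.
HB.instance Definition _ v :=
  GRing.isLinear.Build F L V _ (lline v) (lline_is_linear v).

Fact dot_is_linear a : linear (dot a).
Proof.
move=> b v w; rewrite /dot scaler_sumr -big_split; apply: eq_bigr => i _.
by rewrite !ffunE mulrDr scalerAr.
Qed.
HB.instance Definition _ a :=
  GRing.isLinear.Build F V L _ (dot a) (dot_is_linear a).

Definition Lline (v : V) : {vspace V} := (linfun (lline v) @: fullv)%VS.
Definition common_ker (f g : V) : {vspace V} :=
  (lker (linfun (dot f)) :&: lker (linfun (dot g)))%VS.

Lemma dot_lscale a c v : dot a (lscale c v) = c * dot a v.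
Proof.
by rewrite /dot mulr_sumr; apply: eq_bigr => i _; rewrite ffunE mulrCA.
Qed.

Lemma lscale1 v : lscale 1 v = v.
Proof. by apply/ffunP=> i; rewrite ffunE mul1r. Qed.

Lemma lscaleK c : c != 0 -> cancel (lscale c) (lscale c^-1).
Proof. by move=> c0 v; apply/ffunP=> i; rewrite !ffunE mulrA mulVf ?mul1r. Qed.

Lemma mem_common_ker f g v :
  (v \in common_ker f g) = (dot f v == 0) && (dot g v == 0).
Proof. by rewrite memv_cap !memv_ker !lfunE. Qed.

Lemma dot_mxE p r (A : 'M[L]_(p, k)) (B : 'M[L]_(k, r)) i j :
  dot [ffun l => B l j] [ffun l => A i l] = (A *m B) i j.
Proof. by rewrite mxE; apply: eq_bigr => l _; rewrite !ffunE mulrC. Qed.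

Lemma dim_ffunvf : \dim {:V} = (k * \dim {:L})%N.
Proof. by rewrite !dimvf /dim /= card_ord. Qed.

Lemma lscale_eq0 c v : c != 0 -> (lscale c v == 0) = (v == 0).
Proof.
move=> c0; apply/eqP/eqP=> [cv0|->]; last exact: linear0.
by rewrite -(lscaleK c0 v) cv0 linear0.
Qed.

Lemma dim_lscale_img c (W : {vspace V}) :
  c != 0 -> \dim (linfun (lscale c) @: W) = \dim W.
Proof.
move=> c0; apply: limg_dim_eq; apply/eqP; rewrite -subv0; apply/subvP=> v.
by rewrite memv_cap memv_ker lfunE memv0 lscale_eq0 // => /andP[].
Qed.

Lemma dim_lline_img v (W : {vspace L}) :
  v != 0 -> \dim (linfun (lline v) @: W) = \dim W.
Proof.
move=> v0; apply: limg_dim_eq; apply/eqP; rewrite -subv0; apply/subvP=> c.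
rewrite memv_cap memv_ker lfunE memv0 => /andP[_]; apply: contraTT => c0.
by rewrite lscale_eq0.
Qed.

Lemma Lspan_dot_eq0 (P : pred V) a v :
  Lspan P v -> {in P, forall w, dot a w = 0} -> dot a v = 0.
Proof.
move=> [s [c [Ps [_ ->]]]] aP.
transitivity (\sum_(j < size s) c`_j * dot a s`_j).
  rewrite /dot; under eq_bigr do rewrite ffunE mulr_sumr.
  rewrite exchange_big; apply: eq_bigr => j _; rewrite mulr_sumr.
  by apply: eq_bigr => i _; rewrite mulrCA.
by apply: big1 => j _; rewrite aP ?mulr0 //; apply: (allP Ps); rewrite mem_nth.
Qed.

Lemma exists_nonzero_lscale_mem c (W : {vspace V}) :
  c != 0 -> (\dim {:V} < \dim W + \dim W)%N ->
  exists u, [/\ u != 0, u \in W & lscale c u \in W].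
Proof.
move=> c0 dimW; have : (W :&: (linfun (lscale c) @: W))%VS != 0%VS.
  rewrite -dimv_eq0 -lt0n; have := dimv_sum_cap W (linfun (lscale c) @: W).
  have := dimvS (subvf (W + linfun (lscale c) @: W)).
  by rewrite dim_lscale_img //; lia.
rewrite -vpick0; set w := vpick _ => w0.
have := memv_pick (W :&: (linfun (lscale c) @: W)); rewrite -/w memv_cap.
case/andP=> wW /memv_imgP[u uW wE]; rewrite lfunE /= in wE.
by exists u; split; rewrite -?wE // -(lscale_eq0 _ c0) -wE.
Qed.

Lemma dim_Lline u : u != 0 -> \dim (Lline u) = \dim {:L}.
Proof. exact: dim_lline_img. Qed.

Lemma mem_Lline u c : lscale c u \in Lline u.
Proof. by apply/memv_imgP; exists c; rewrite ?memvf ?lfunE. Qed.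

Lemma dim_Lline_add u x (W : {vspace L}) :
  u != 0 -> x \notin Lline u ->
  \dim (Lline u + linfun (lline x) @: W) = (\dim {:L} + \dim W)%N.
Proof.
move=> u0 xNu; have x0 : x != 0 by apply: contraNneq xNu => ->; rewrite mem0v.
rewrite dimv_disjoint_sum ?dim_Lline ?dim_lline_img //.
apply/eqP; rewrite -subv0; apply/subvP=> z; rewrite memv_cap memv0.
case/andP=> /memv_imgP[a _ ->] /memv_imgP[b _]; rewrite !lfunE /= => eab.
have [b0 | b0] := eqVneq b 0.
  by rewrite eab b0; apply/eqP/ffunP=> i; rewrite !ffunE mul0r.
case/negP: xNu; rewrite -(lscaleK b0 x) -[lscale b x]eab.
suff -> : lscale b^-1 (lscale a u) = lscale (b^-1 * a) u by apply: mem_Lline.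
by apply/ffunP=> i; rewrite !ffunE mulrA.
Qed.

Lemma Lline_sub_common_ker f g u :
  u \in common_ker f g -> (Lline u <= common_ker f g)%VS.
Proof.
rewrite mem_common_ker => /andP[/eqP fu /eqP gu].
apply/subvP=> _ /memv_imgP[c _ ->]; rewrite lfunE /= mem_common_ker.
by rewrite !dot_lscale fu gu mulr0 eqxx.
Qed.

Lemma lline_img_vline z (c : L) :
  (linfun (lline z) @: <[c]> = <[lscale c z]>)%VS.
Proof. by rewrite limg_line lfunE. Qed.

Lemma dim_capv_ge_Lline (U S : {vspace V}) u x (W : {vspace L}) :
    u != 0 -> x \notin Lline u -> (Lline u <= S)%VS ->
    (linfun (lline x) @: W <= U :&: S + Lline u)%VS ->
  (\dim W + \dim (U :&: Lline u) <= \dim (U :&: S))%N.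
Proof.
move=> u0 xNu uS xW.
have sum_cap := dimv_sum_cap (U :&: S) (Lline u).
have /dimvS cap_le : (U :&: Lline u <= U :&: S :&: Lline u)%VS.
  by rewrite subv_cap capvSr andbT capvS.
have /dimvS sum_ge : (Lline u + linfun (lline x) @: W <= U :&: S + Lline u)%VS.
  by rewrite subv_add addvSr xW.
rewrite dim_Lline_add // in sum_ge; rewrite dim_Lline // in sum_cap; lia.
Qed.

End CoordinateSpace.

Lemma dim_vline1_addv (F : fieldType) (L : fieldExtType F) (lam : L) :
  lam \notin <[1]>%VS -> \dim (<[1]> + <[lam]>) = 2%N.
Proof.
move=> lamF; have lam0 : lam != 0.
  by apply: contraNneq lamF => ->; rewrite mem0v.
rewrite dimv_disjoint_sum ?dim_vline ?oner_eq0 ?lam0 //.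
apply/eqP; rewrite -subv0; apply/subvP=> z; rewrite memv_cap memv0.
case/andP=> /vlineP[a ->] /vlineP[b eab].
have [b0 | b0] := eqVneq b 0; first by rewrite eab b0 scale0r.
case/negP: lamF; rewrite -[lam](scalerK b0) -eab.
by rewrite !rpredZ // memv_line.
Qed.

Lemma exists_dual_annihilator (K : fieldType) m n (M : 'M[K]_(m, m + n)) :
  exists (G : 'M_(m + n, n)) (E : 'M_(n, m + n)), M *m G = 0 /\ E *m G = 1%:M.
Proof.
pose R := row_ebase M; pose Y : 'M[K]_(m + n, n) := col_mx 0 1%:M.
have invR : R \in unitmx by apply: row_ebase_unit.
(* As \rank M <= m, the last n coordinates in the basis row_ebase M are
   killed by M. *)
exists (invmx R *m Y), (Y^T *m R); split.
  rewrite -(mulmx_ebase M) -!mulmxA (mulmxA R) mulmxV // mul1mx.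
  have -> : pid_mx (\rank M) =
            pid_mx (\rank M) *m (pid_mx m : 'M_(m + n)) :> 'M[K]_(m, m + n).
    by rewrite mul_pid_mx (minn_idPl (rank_leq_row M)) pid_mx_minh.
  rewrite -mulmxA pid_mx_block mul_block_col !mul0mx !mulmx0 !addr0.
  by rewrite col_mx0 !mulmx0.
rewrite mulmxA -(mulmxA Y^T) mulmxV // mulmx1 tr_col_mx mul_row_col.
by rewrite trmx0 trmx1 mul0mx mul1mx add0r.
Qed.

Section FiniteBaseField.
Variable F : finFieldType.

Lemma card_finvect (vT : vectType F) : #|finvect_type vT| = (#|F| ^ dim vT)%N.
Proof.
have := @card_vspacef F (finvect_type vT)
  (Vector.class (finvect_type vT : vectType F)).
by rewrite card_vspace dimvf.
Qed.

Lemma exists_notin_img_nonzero (vT wT : vectType F) (C : {vspace vT})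
    (phi : vT -> wT) :
  (\dim C <= dim wT)%N ->
  exists a, forall c, c \in C -> c != 0 -> phi c != a.
Proof.
move=> dimC.
pose img := [set (phi (vsval c) : finvect_type wT)
              | c : finvect_type (subvs_of C) in [set~ 0]].
have card_img : (#|img| < #|F| ^ dim wT)%N.
  apply: leq_ltn_trans (leq_imset_card _ _) _; rewrite cardsC1 card_finvect.
  have q0 : (0 < #|F|)%N by apply/card_gt0P; exists 0.
  by rewrite prednK ?expn_gt0 ?q0 // leq_pexp2l.
have [a _ aNimg] : exists2 a, a \in [set: finvect_type wT] & a \notin img.
  apply/subsetPn; apply: contraTN card_img => /subset_leq_card.
  by rewrite cardsT card_finvect leqNgt.
exists a => c cC c0; apply: contraNneq aNimg => <-.
apply/imsetP; exists (vsproj C c); last by rewrite vsprojK.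
rewrite !inE; apply: contraNneq c0 => c'0.
by rewrite -(vsprojK cC) c'0 linear0.
Qed.

Variables (L : fieldExtType F) (k : nat).
Local Notation V := {ffun 'I_k -> L}.

Lemma exists_scalar_separating (U K : {vspace V}) (f g : V) :
    (K <= U :&: common_ker f g)%VS -> (\dim U <= \dim K + \dim {:L})%N ->
  exists al : L, forall w, w \in U -> al * dot f w + dot g w = 0 -> dot f w = 0.
Proof.
rewrite subv_cap => /andP[KU /subvP Kker] dimUK.
have dimC : (\dim (U :\: K) <= dim L)%N.
  by move: dimUK; rewrite -(dimv_cap_compl U K) (capv_idPr KU) dimvf leq_add2l.
have [al alP] := exists_notin_img_nonzero (fun c => - dot g c / dot f c) dimC.
exists al => w; rewrite -{1}(addv_diff_cap U K) (capv_idPr KU).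
case/memv_addP=> c cC [z zK ->].
have /andP[/eqP fz /eqP gz] : (dot f z == 0) && (dot g z == 0).
  by rewrite -mem_common_ker Kker.
rewrite !linearD /= fz gz !addr0 => alc.
have [//|fc0] := eqVneq (dot f c) 0.
have c0 : c != 0 by apply: contraNneq fc0 => ->; rewrite linear0.
case/eqP: (alP c cC c0).
have -> : dot g c = - (al * dot f c) by apply/eqP; rewrite -addr_eq0 addrC alc.
by rewrite opprK mulfK.
Qed.

Lemma not_cutting_of_section (U K : {vspace V}) (f g e e' : V) :
    biorthogonal f g e e' -> (K <= U :&: common_ker f g)%VS ->
    (\dim U <= \dim K + \dim {:L})%N ->
  ~ is_cutting U.
Proof.
case=> fe fe' ge ge' KUker dimUK cutU.
have [al alP] := exists_scalar_separating KUker dimUK.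
pose a : V := [ffun i => al * f i + g i].
pose v : V := [ffun i => e i - al * e' i].
have dot_a w : dot a w = al * dot f w + dot g w.
  rewrite /dot mulr_sumr -big_split; apply: eq_bigr => i _.
  by rewrite ffunE mulrDl mulrA.
have dot_v b : dot b v = dot b e - al * dot b e'.
  rewrite /dot mulr_sumr -sumrB; apply: eq_bigr => i _.
  by rewrite ffunE mulrBr mulrCA.
have a0 : a != 0.
  apply/eqP=> a0; move: (dot_a e'); rewrite a0 fe' ge' mulr0 add0r /dot big1.
    by move/eqP; rewrite eq_sym oner_eq0.
  by move=> i _; rewrite ffunE mul0r.
have vH : v \in Lhyperplane a.
  by rewrite inE -/(dot a v) dot_a !dot_v fe fe' ge ge'; apply/eqP; ring.
have fv : dot f v = 1 by rewrite dot_v fe fe' mulr0 subr0.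
have : dot f v = 0.
  apply: Lspan_dot_eq0 (cutU a a0 v vH) _ => w /andP[wH wU].
  by apply: alP wU _; rewrite -dot_a; apply/eqP.
by rewrite fv => /eqP; rewrite oner_eq0.
Qed.

End FiniteBaseField.

Lemma exists_biorthogonal_annihilating (F : fieldType) (L : fieldExtType F)
    (u x : {ffun 'I_4 -> L}) :
  exists f g e e', biorthogonal f g e e' /\
    (u \in common_ker f g) && (x \in common_ker f g).
Proof.
pose M : 'M[L]_(2, 2 + 2) := \matrix_(i, l) (if i == 0 then u l else x l).
have [G [E [MG EG]]] := exists_dual_annihilator M.
have -> : u = [ffun l => M 0 l] by apply/ffunP=> l; rewrite !ffunE mxE.
have -> : x = [ffun l => M 1 l] by apply/ffunP=> l; rewrite !ffunE mxE.
exists [ffun l => G l 0], [ffun l => G l 1].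
exists [ffun l => E 0 l], [ffun l => E 1 l].
by rewrite /biorthogonal !mem_common_ker !dot_mxE MG EG !mxE !eqxx.
Qed.

Section DimensionFour.
Variables (F : fieldType) (L : fieldExtType F) (U : {vspace {ffun 'I_4 -> L}}).
Hypotheses (dimL : \dim {:L} = 3%N) (dimU : \dim U = 7%N).

Let dimV : \dim {:{ffun 'I_4 -> L}} = 12%N.
Proof. by rewrite dim_ffunvf dimL. Qed.

Lemma exists_notin_with_lscale_in_addv (lam : L)
    (P : {vspace {ffun 'I_4 -> L}}) :
    lam != 0 -> \dim P = 3%N ->
  exists x, [/\ x \in U, x \notin P &
              (P <= U)%VS \/ lscale lam x \in (U + P)%VS].
Proof.
move=> lam0 dimP; have [PU | PnU] := boolP (P <= U)%VS.
  have [x xU xP] : exists2 x, x \in U & x \notin P.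
    by apply/subvPn/negP=> /dimvS; rewrite dimU dimP.
  by exists x; split => //; left.
(* Now \dim (U :&: P) <= 2, so lam^-1 (U + P) has dimension >= 8 and meets U
   in more than U :&: P. *)
pose Y := (linfun (lscale lam^-1) @: (U + P))%VS.
have sumUP := dimv_sum_cap U P; rewrite dimU dimP in sumUP.
have capUP : (\dim (U :&: P) < \dim P)%N.
  rewrite (ltn_leqif (dimv_leqif_eq (capvSr U P))).
  by apply: contraNneq PnU => <-; rewrite capvSl.
have dimY : \dim Y = \dim (U + P) by rewrite dim_lscale_img ?invr_neq0.
have /subvPn[x] : ~~ (U :&: Y <= P)%VS.
  apply/negP=> UYP.
  have /dimvS : (U :&: Y <= U :&: P)%VS by rewrite subv_cap capvSl.
  have := dimv_sum_cap U Y; have := dimvS (subvf (U + Y)).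
  by rewrite dimV dimY dimU; lia.
rewrite memv_cap => /andP[xU /memv_imgP[z zUP xE]] xP.
exists x; split => //; right.
by rewrite xE lfunE /= -{1}(invrK lam) lscaleK ?invr_neq0.
Qed.

Lemma exists_large_common_ker_section :
  exists f g e e',
    biorthogonal f g e e' /\ (4 <= \dim (U :&: common_ker f g))%N.
Proof.
have /subvPn[lam _ lamF] : ~~ ({:L} <= <[1]>)%VS.
  by apply/negP=> /dimvS; rewrite dimL dim_vline oner_eq0.
have lam0 : lam != 0 by apply: contraNneq lamF => ->; rewrite mem0v.
have [u [u0 uU lamuU]] : exists u, [/\ u != 0, u \in U & lscale lam u \in U].
  by apply: exists_nonzero_lscale_mem; rewrite ?dimV ?dimU.
have dimP : \dim (Lline u) = 3%N by rewrite dim_Lline.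
have [x [xU xNu xcase]] := exists_notin_with_lscale_in_addv lam0 dimP.
have [f [g [e [e' [fge /andP[uS xS]]]]]] :=
  exists_biorthogonal_annihilating u x.
exists f, g, e, e'; split => //.
have PS := Lline_sub_common_ker uS.
have xK : x \in (U :&: common_ker f g)%VS by rewrite memv_cap xU xS.
have lline_E z :
    (linfun (lline z) @: (<[1]> + <[lam]>) = <[z]> + <[lscale lam z]>)%VS.
  by rewrite limgD !lline_img_vline lscale1.
case: xcase => [PU | lamxUP].
  apply: leq_trans (dim_capv_ge_Lline (W := <[1]>) u0 xNu PS _).
    by rewrite dim_vline oner_eq0 (capv_idPr PU) dimP.
  by rewrite lline_img_vline lscale1 -memvE (subvP (addvSl _ _)).
apply: leq_trans (dim_capv_ge_Lline (W := <[1]> + <[lam]>) u0 xNu PS _).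
  have /dimvS : (linfun (lline u) @: (<[1]> + <[lam]>) <= U :&: Lline u)%VS.
    by rewrite subv_cap limgS ?subvf // lline_E subv_add -!memvE uU lamuU.
  by rewrite dim_lline_img // dim_vline1_addv.
rewrite lline_E subv_add -!memvE (subvP (addvSl _ _)) //=.
case/memv_addP: lamxUP => y yU [p pP lamxE].
have yS : y \in common_ker f g.
  rewrite (_ : y = lscale lam x - p); last by rewrite lamxE addrK.
  have lamxS := subvP (Lline_sub_common_ker xS) _ (mem_Lline x lam).
  by rewrite rpredB ?(subvP PS _ pP).
by rewrite lamxE memv_add // memv_cap yU yS.
Qed.

End DimensionFour.

(* In ring_scope the numerals of the statement would elaborate as n%:R. *)
Local Close Scope ring_scope.

(* F = F_q ranges over all finite fields (q = #|F| any prime power),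
   L is an extension of F of degree 3, i.e. L = F_{q^3}. *)
Theorem corollary3p12 (F : finFieldType) (L : fieldExtType F)
    (HL : \dim (fullv : {vspace L}) = 3)
    (U : {vspace {ffun 'I_4 -> L}}) :
  ~ (is_system 7 U /\ is_cutting U).
Proof.
case=> [[dimU _] cutU].
have [f [g [e [e' [fge dimK]]]]] := exists_large_common_ker_section HL dimU.
apply: not_cutting_of_section fge (subvv _) _ cutU.
by rewrite dimU HL (leq_add2r 3 4).
Qed.
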